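(* For every commutative $n$-cube $D:\{0\to1\}^n\to\Delta_+$, the assignment $v\mapsto H_{comb}(c_v)$ together with the maps $H_{comb}(c_w)\to H_{comb}(c_v)$ described below forms a commutative diagram, i.e. a functor $H_{comb}(D):N(P_n)\to\mathrm{sSet}^{op}$ (an $n$-cube of correspondences in $\mathrm{sSet}^{op}$).
   Context: $\Delta_+$ is the category of finite linear orders and monotone maps. For $X\in\Delta_+$, $\langle X\rangle$ is the simplicial set represented by the ordered set $\mathrm{Hom}(X,\{0<1\})$ (pointwise order). For an interval $X$ of a linear order $Y$, $i_!:\langle X\rangle\to\langle Y\rangle$ extends $\varphi$ by $0$ below $X$ and $1$ above $X$. For monotone $\alpha:X\to Y$, $H_{comb}(\alpha)\subseteq\langle X\rangle$ is the simplicial subset given by the union of the images of $i_!:\langle\alpha^{-1}(y)\rangle\to\langle X\rangle$, $y\in Y$. For $X\xrightarrow{f}Y\xrightarrow{g}Z$ with $\alpha=gf$: the map $H_{comb}(f)\to H_{comb}(\alpha)$ is the inclusion inside $\langle X\rangle$ (each fiber of $f$ is a subinterval of a fiber of $\alpha$), and $H_{comb}(g)\to H_{comb}(\alpha)$ is, on each $\langle g^{-1}(z)\rangle$, the map $\langle g^{-1}(z)\rangle\to\langle\alpha^{-1}(z)\rangle$ induced by $f|:\alpha^{-1}(z)\to g^{-1}(z)$. $P_n$ is the poset of faces $v\in\{-,0,+\}^n$ of the $n$-cube, $v\to w$ iff $w$ is a subface of $v$ (i.e. $v_i=\pm\Rightarrow w_i=v_i$); face $v$ consists of vertices $\varepsilon$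 with $\varepsilon_i=0$ where $v_i=-$ and $\varepsilon_i=1$ where $v_i=+$. $c_v$ is the composite map in $D$ from the initial vertex of face $v$ to its terminal vertex. For $w$ a subface of $v$, write $c_v=h\circ c_w\circ f$ with $f$ from the initial vertex of $v$ to that of $w$ and $h$ from the terminal vertex of $w$ to that of $v$; the map $H_{comb}(c_w)\to H_{comb}(c_v)$ is the composite $H_{comb}(c_w)\to H_{comb}(h c_w)\to H_{comb}(hc_wf)$ of the two kinds of maps above. *)

From HB Require Import structures.
From mathcomp Require Import all_boot.
From Stdlib Require Import ClassicalEpsilon.

Set Implicit Arguments.
Unset Strict Implicit.
Unset Printing Implicit Defensive.

(* Delta_+ : the object with m elements is the linear order 'I_m
   (m = 0 is the empty order); morphisms are monotone maps.                *)
Definition monotone (m n : nat) (f : 'I_m -> 'I_n) : Prop :=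
  forall i j : 'I_m, i <= j -> f i <= f j.

(* Hom(T, {0<1}) for an ordered type (T, le): monotone maps to bool.
   Pointwise order: phi <= psi iff forall x, phi x -> psi x.               *)
Definition monob (T : Type) (le : T -> T -> bool) (phi : T -> bool) : Prop :=
  forall x y, le x y -> phi x -> phi y.

(* k-simplices of <T> = nerve of the poset Hom(T,{0<1}):
   monotone maps [k] = 'I_k.+1 -> Hom(T,{0<1}).                            *)
Definition is_simplex (T : Type) (le : T -> T -> bool) (k : nat)
    (s : 'I_k.+1 -> T -> bool) : Prop :=
  (forall j, monob le (s j)) /\
  (forall j j' : 'I_k.+1, j <= j' -> forall x, s j x -> s j' x).

(* the fiber a^{-1}(z) of a : 'I_m -> 'I_p, an interval of 'I_m when a is
   monotone, with the order induced from 'I_m *)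
Definition fiber (m p : nat) (a : 'I_m -> 'I_p) (z : 'I_p) : Type :=
  {x : 'I_m | a x == z}.

Definition fiber_le (m p : nat) (a : 'I_m -> 'I_p) (z : 'I_p)
  (x y : fiber a z) : bool := val x <= val y.

(* i_! : <a^{-1}(z)> -> <'I_m> on vertices: extend psi by 0 below the
   interval a^{-1}(z) and by 1 above it. *)
Definition ext_fib (m p : nat) (a : 'I_m -> 'I_p) (z : 'I_p)
    (psi : fiber a z -> bool) : 'I_m -> bool :=
  fun y => match (insub y : option {x : 'I_m | a x == z}) with
           | Some s => psi s
           | None => z < a y
           end.

Definition in_piece (m p : nat) (a : 'I_m -> 'I_p) (k : nat)
    (s : 'I_k.+1 -> 'I_m -> bool) (z : 'I_p) (t : 'I_k.+1 -> fiber a z -> bool)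
    : Prop :=
  is_simplex (@fiber_le m p a z) t /\ forall j, s j = ext_fib (t j).

Definition Hcomb (m p : nat) (a : 'I_m -> 'I_p) (k : nat)
    (s : 'I_k.+1 -> 'I_m -> bool) : Prop :=
  exists z t, @in_piece m p a k s z t.

(* For X --f--> Y --g--> Z with alpha = g f:                               *)

(* (1) H_comb(f) -> H_comb(alpha): the inclusion inside <X>. *)
Definition Hincl (m k : nat) (s : 'I_k.+1 -> 'I_m -> bool) := s.

Definition frestr (m q p : nat) (f : 'I_m -> 'I_q) (g : 'I_q -> 'I_p)
    (z : 'I_p) (x : fiber (fun x => g (f x)) z) : fiber g z :=
  exist (fun y => g y == z) (f (val x)) (valP x).

(* (2) H_comb(g) -> H_comb(alpha): on the piece <g^{-1}(z)> it is the map
   <g^{-1}(z)> -> <alpha^{-1}(z)> induced by f| (followed by i_!).  Outside H_comb(g) the value is an irrelevant default. *)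
Definition Hpush (m q p : nat) (f : 'I_m -> 'I_q) (g : 'I_q -> 'I_p)
    (k : nat) (s : 'I_k.+1 -> 'I_q -> bool) : 'I_k.+1 -> 'I_m -> bool :=
  match excluded_middle_informative
          (exists zt : {z : 'I_p & 'I_k.+1 -> fiber g z -> bool},
              in_piece s (projT2 zt)) with
  | left H =>
      let zt := proj1_sig (constructive_indefinite_description _ H) in
      fun j => @ext_fib m p (fun x => g (f x)) (projT1 zt)
                 (fun x => projT2 zt j (frestr x))
  | right _ => fun j x => s j (f x)
  end.

(* Commutative n-cubes D : {0->1}^n -> Delta_+.  Vertices are
   e : {ffun 'I_n -> bool}; ob e is the size of the linear order D(e);
   mor e e' is D(e <= e') (only meaningful when e <= e').                  *)
Definition leV (n : nat) (e e' : {ffun 'I_n -> bool}) : Prop :=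
  forall i, e i -> e' i.

Definition is_cube (n : nat) (ob : {ffun 'I_n -> bool} -> nat)
    (mor : forall e e' : {ffun 'I_n -> bool}, 'I_(ob e) -> 'I_(ob e')) : Prop :=
  (forall e e', leV e e' -> monotone (mor e e')) /\
  (forall e (x : 'I_(ob e)), mor e e x = x) /\
  (forall e e' e'', leV e e' -> leV e' e'' ->
     forall x : 'I_(ob e), mor e' e'' (mor e e' x) = mor e e'' x).

(* Faces of the n-cube: v : {ffun 'I_n -> option bool}, with
   Some false = '-', None = '0', Some true = '+'. *)
Definition face_init (n : nat) (v : {ffun 'I_n -> option bool})
  : {ffun 'I_n -> bool} := [ffun i => v i == Some true].
Definition face_term (n : nat) (v : {ffun 'I_n -> option bool})
  : {ffun 'I_n -> bool} := [ffun i => v i != Some false].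

(* v -> w in P_n iff w is a subface of v *)
Definition subface (n : nat) (w v : {ffun 'I_n -> option bool}) : Prop :=
  forall i, v i != None -> w i = v i.

Definition cmap (n : nat) (ob : {ffun 'I_n -> bool} -> nat)
    (mor : forall e e' : {ffun 'I_n -> bool}, 'I_(ob e) -> 'I_(ob e'))
    (v : {ffun 'I_n -> option bool}) :
    'I_(ob (face_init v)) -> 'I_(ob (face_term v)) :=
  mor (face_init v) (face_term v).
Arguments cmap {n ob} mor v _.

(* The map H_comb(c_w) -> H_comb(c_v) for w a subface of v, with
   c_v = h c_w f:  H_comb(c_w) -> H_comb(h c_w) -> H_comb(h c_w f). *)
Definition Hmap (n : nat) (ob : {ffun 'I_n -> bool} -> nat)
    (mor : forall e e' : {ffun 'I_n -> bool}, 'I_(ob e) -> 'I_(ob e'))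
    (w v : {ffun 'I_n -> option bool}) (k : nat)
    (s : 'I_k.+1 -> 'I_(ob (face_init w)) -> bool)
    : 'I_k.+1 -> 'I_(ob (face_init v)) -> bool :=
  let f := mor (face_init v) (face_init w) in
  let h := mor (face_term w) (face_term v) in
  Hpush f (fun y => h (cmap mor w y)) (Hincl s).
Arguments Hmap {n ob} mor w v {k} s _ _.

(* The map <g^{-1}(z)> -> <alpha^{-1}(z)> induced by f|, followed by i_!, is
   precomposition with f: on alpha^{-1}(z) this is the definition of f|, and
   outside it both sides read "z < alpha x".  So H_comb(c_w) -> H_comb(c_v)
   is precomposition with D(init v -> init w), which is simplicial and
   respects identities and composites because D is a functor.  It lands in
   H_comb(c_v) since precomposing the piece of H_comb(a) over z with f gives
   the piece of H_comb(h a f) over h z: where h (a x) <> h z, a monotone h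
   keeps x on the same side of the fibre. *)
From HB Require Import structures.
From mathcomp Require Import all_boot.
From Stdlib Require Import FunctionalExtensionality ClassicalEpsilon.

Set Implicit Arguments.
Unset Strict Implicit.
Unset Printing Implicit Defensive.

Section ExtensionByZeroOne.

Variables (m p : nat) (a : 'I_m -> 'I_p) (z : 'I_p).

Lemma ext_fib_in (psi : fiber a z -> bool) (y : 'I_m) (ayz : a y == z) :
  ext_fib psi y = psi (exist _ y ayz).
Proof. by rewrite /ext_fib insubT. Qed.

Lemma ext_fib_out (psi : fiber a z -> bool) (y : 'I_m) :
  a y != z -> ext_fib psi y = (z < a y).
Proof. by move=> ayz; rewrite /ext_fib insubN. Qed.

Lemma ext_fib_monob (psi : fiber a z -> bool) :
  monotone a -> monob (@fiber_le m p a z) psi ->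
  monob (fun x y : 'I_m => x <= y) (ext_fib psi).
Proof.
move=> a_mono psi_mono x y le_xy; have le_axy := a_mono _ _ le_xy.
case: (eqVneq (a x) z) => [axz | axz]; case: (eqVneq (a y) z) => [ayz | ayz].
- by rewrite !(ext_fib_in psi (introT eqP _)); apply: psi_mono.
- by move=> _; rewrite ext_fib_out // ltn_neqAle eq_sym ayz -axz.
- rewrite ext_fib_out // => lt_zax.
  by move: (leq_trans lt_zax le_axy); rewrite ayz ltnn.
- by rewrite !ext_fib_out // => lt_zax; exact: leq_trans lt_zax le_axy.
Qed.

Lemma ext_fib_le (psi psi' : fiber a z -> bool) (y : 'I_m) :
  (forall u, psi u -> psi' u) -> ext_fib psi y -> ext_fib psi' y.
Proof. by rewrite /ext_fib; case: insubP => //= u _ _; apply. Qed.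

End ExtensionByZeroOne.

Lemma ext_fib_frestr (m q p : nat) (f : 'I_m -> 'I_q) (g : 'I_q -> 'I_p)
    (z : 'I_p) (psi : fiber g z -> bool) (y : 'I_m) :
  @ext_fib m p (fun x => g (f x)) z (fun x => psi (frestr x)) y
  = ext_fib psi (f y).
Proof.
have [fibre_y | gfyz] := boolP (g (f y) == z); last by rewrite !ext_fib_out.
rewrite (ext_fib_in (a := fun x => g (f x)) _ fibre_y) (ext_fib_in _ fibre_y).
by congr psi; apply: val_inj.
Qed.

Lemma HpushE (m q p : nat) (f : 'I_m -> 'I_q) (g : 'I_q -> 'I_p) (k : nat)
    (s : 'I_k.+1 -> 'I_q -> bool) :
  Hpush f g s = fun j x => s j (f x).
Proof.
rewrite /Hpush; case: excluded_middle_informative => // piece.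
case: (proj2_sig (constructive_indefinite_description _ piece)) => _ sE.
apply: functional_extensionality => j; apply: functional_extensionality => y.
by rewrite ext_fib_frestr sE.
Qed.

Lemma monotone_ltn_neq (m p : nat) (h : 'I_m -> 'I_p) (x z : 'I_m) :
  monotone h -> h x != h z -> (h z < h x) = (z < x).
Proof.
move=> h_mono hxz; case: (ltngtP z x) => [lt_zx | lt_xz | zx].
- by rewrite ltn_neqAle val_eqE eq_sym hxz h_mono // ltnW.
- by apply/negbTE; rewrite -leqNgt h_mono // ltnW.
- by move: hxz; rewrite (val_inj zx) eqxx.
Qed.

Lemma Hcomb_precomp (m q p r : nat) (f : 'I_m -> 'I_q) (a : 'I_q -> 'I_p)
    (h : 'I_p -> 'I_r) (c : 'I_m -> 'I_r) (k : nat)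
    (s : 'I_k.+1 -> 'I_q -> bool) :
  monotone f -> monotone a -> monotone h -> (forall x, c x = h (a (f x))) ->
  Hcomb a s -> Hcomb c (fun j x => s j (f x)).
Proof.
move=> f_mono a_mono h_mono cE [z [t [[t_mono t_le] sE]]].
exists (h z), (fun j (y : fiber c (h z)) => s j (f (val y))); split; first split.
- move=> j x y le_xy; rewrite sE; apply: ext_fib_monob => //.
  exact: f_mono.
- by move=> j j' le_jj' x; rewrite !sE; apply: ext_fib_le; apply: t_le.
- move=> j; apply: functional_extensionality => y.
  case: (eqVneq (c y) (h z)) => [cyz | cyz].
    by rewrite (ext_fib_in _ (introT eqP cyz)).
  have afyz : a (f y) != z by apply: contraNneq cyz; rewrite cE => ->.
  by rewrite ext_fib_out // sE ext_fib_out // cE monotone_ltn_neq // -cE.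
Qed.

Section FacesOfTheCube.

Variables (n : nat) (w v : {ffun 'I_n -> option bool}).

Lemma leV_face_init_term : leV (face_init w) (face_term w).
Proof. by move=> i; rewrite !ffunE => /eqP ->. Qed.

Hypothesis wv : subface w v.

Lemma subface_init : leV (face_init v) (face_init w).
Proof. by move=> i; rewrite !ffunE => /eqP vi; rewrite wv vi. Qed.

Lemma subface_term : leV (face_term w) (face_term v).
Proof. by move=> i; rewrite !ffunE; case vi: (v i) => [b|] //; rewrite wv vi. Qed.

End FacesOfTheCube.

Lemma HmapE (n : nat) (ob : {ffun 'I_n -> bool} -> nat)
    (mor : forall e e' : {ffun 'I_n -> bool}, 'I_(ob e) -> 'I_(ob e'))
    (w v : {ffun 'I_n -> option bool}) (k : nat)
    (s : 'I_k.+1 -> 'I_(ob (face_init w)) -> bool) :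
  Hmap mor w v s = fun j x => s j (mor (face_init v) (face_init w) x).
Proof. exact: HpushE. Qed.

Theorem proposition4p7 (n : nat) (ob : {ffun 'I_n -> bool} -> nat)
    (mor : forall e e' : {ffun 'I_n -> bool}, 'I_(ob e) -> 'I_(ob e'))
    (HD : is_cube mor) :
  (* each map H_comb(c_w) -> H_comb(c_v) is well defined ... *)
  (forall w v, subface w v -> forall k (s : 'I_k.+1 -> 'I_(ob (face_init w)) -> bool),
     Hcomb (cmap mor w) s -> Hcomb (cmap mor v) (Hmap mor w v s)) /\
  (* ... and simplicial (commutes with all simplicial operators) *)
  (forall w v, subface w v -> forall k l (th : 'I_l.+1 -> 'I_k.+1), monotone th ->
     forall s : 'I_k.+1 -> 'I_(ob (face_init w)) -> bool,
     Hcomb (cmap mor w) s ->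
     Hmap mor w v (fun j => s (th j)) = (fun j => Hmap mor w v s (th j))) /\
  (* identities *)
  (forall v k (s : 'I_k.+1 -> 'I_(ob (face_init v)) -> bool),
     Hcomb (cmap mor v) s -> Hmap mor v v s = s) /\
  (* composition: u subface of w subface of v *)
  (forall u w v, subface u w -> subface w v ->
     forall k (s : 'I_k.+1 -> 'I_(ob (face_init u)) -> bool),
     Hcomb (cmap mor u) s -> Hmap mor w v (Hmap mor u w s) = Hmap mor u v s).
Proof.
case: HD => [mor_mono [mor_id mor_comp]].
split; [|split; [|split]].
- move=> w v wv k s s_w; rewrite HmapE.
  have init_vw := subface_init wv; have term_wv := subface_term wv.
  have init_term_w := @leV_face_init_term _ w.
  have init_w_term_v : leV (face_init w) (face_term v).
    by move=> i /init_term_w /term_wv.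
  apply: (Hcomb_precomp (h := mor (face_term w) (face_term v))) s_w;
    try exact: mor_mono.
  by move=> x; rewrite /cmap !mor_comp.
- by move=> w v _ k l th _ s _; rewrite !HmapE.
- move=> v k s _; rewrite HmapE.
  by do 2![apply: functional_extensionality => ?]; rewrite mor_id.
- move=> u w v uw wv k s _; rewrite !HmapE.
  do 2![apply: functional_extensionality => ?].
  by rewrite mor_comp //; apply: subface_init.
Qed.
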